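(* Let $X$ be an abelian metric group and $f:X\to\mathbb{R}$ any function. Then: (i) if $f$ is locally bounded at some point, then $f$ is bounded on some shift-compact set in $X$; (ii) if $f$ is bounded on some shift-compact set in $X$, then $f$ is a WNT-function.
   Context: An abelian metric group is an abelian topological group whose topology is given by an invariant metric. A set $A\subset X$ is shift-compact if for every sequence $(x_n)$ tending to $0$ in $X$ there exists $x\in X$ such that $\{n\in\mathbb{N}: x+x_n\in A\}$ is infinite. Locally bounded at a point means $|f|$ is bounded on some neighbourhood of that point. For $k\in\mathbb{N}$ let $H^k:=f^{-1}((-k,k))$. $f$ is a WNT-function if for every convergent sequence $(u_n)_{n\in\mathbb{N}}$ in $X$ there exist $k\in\mathbb{N}$, an infinite set $\mathbb{M}\subset\mathbb{N}$ and $t\in X$ such that $\{t+u_m: m\in\mathbb{M}\}\subset H^k$. *)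

From HB Require Import structures.
From mathcomp Require Import all_boot all_order all_algebra.
From mathcomp Require Import boolp classical_sets cardinality reals.
Set Implicit Arguments. Unset Strict Implicit. Unset Printing Implicit Defensive.
Import Order.TTheory GRing.Theory Num.Theory.
Local Open Scope ring_scope.
Local Open Scope classical_set_scope.

(* An abelian metric group: an abelian group X (zmodType) together with a
   metric d that is translation invariant; the topology of X is the one
   induced by d (group operations are then automatically continuous). *)
Definition invariant_metric (R : realType) (X : zmodType) (d : X -> X -> R) : Prop :=
  [/\ (forall x y, d x y = 0 <-> x = y),
      (forall x y, d x y = d y x),
      (forall x y z, d x z <= d x y + d y z) &
      (forall x y z, d (x + z) (y + z) = d x y)].

Definition cvg_to (R : realType) (X : zmodType) (d : X -> X -> R)
    (u : nat -> X) (l : X) : Prop :=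
  forall e : R, 0 < e -> exists N : nat, forall n : nat, (N <= n)%N -> d (u n) l < e.

Definition convergent (R : realType) (X : zmodType) (d : X -> X -> R)
    (u : nat -> X) : Prop := exists l : X, cvg_to d u l.

Definition shift_compact (R : realType) (X : zmodType) (d : X -> X -> R)
    (A : set X) : Prop :=
  forall u : nat -> X, cvg_to d u 0 ->
    exists x : X, infinite_set [set n : nat | A (x + u n)].

Definition locally_bounded_at (R : realType) (X : zmodType) (d : X -> X -> R)
    (f : X -> R) (p : X) : Prop :=
  exists r : R, 0 < r /\ exists M : R, forall x : X, d x p < r -> `|f x| <= M.

Definition bounded_on (R : realType) (X : zmodType) (f : X -> R) (A : set X) : Prop :=
  exists M : R, forall x : X, A x -> `|f x| <= M.

Definition Hk (R : realType) (X : zmodType) (f : X -> R) (k : nat) : set X :=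
  [set x | - (k%:R) < f x < k%:R].

Definition WNT (R : realType) (X : zmodType) (d : X -> X -> R) (f : X -> R) : Prop :=
  forall u : nat -> X, convergent d u ->
    exists (k : nat) (M : set nat) (t : X),
      infinite_set M /\ [set t + u m | m in M] `<=` Hk f k.

From HB Require Import structures.
From mathcomp Require Import all_boot all_order all_algebra.
From mathcomp Require Import boolp classical_sets cardinality reals.
Set Implicit Arguments. Unset Strict Implicit. Unset Printing Implicit Defensive.
Import Order.TTheory GRing.Theory Num.Theory.
Local Open Scope ring_scope.
Local Open Scope classical_set_scope.

(* By translation invariance, d (p + x_n) p = d x_n 0, so a null sequence
   translated by p eventually stays in any ball around p: balls are
   shift-compact, which gives (i).  For (ii), if u_n -> l then u_n - l is
   null, so x + (u_n - l) lies in A, where |f| <= M, for infinitely many n;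
   with t := x - l these t + u_n all lie in H^k for any k > M. *)

Lemma infinite_set_ge (N : nat) : infinite_set [set n | (N <= n)%N].
Proof.
apply: cofinite_set_infinite; first exact: infinite_nat.
apply: sub_finite_set (finite_II N) => n /=.
by rewrite leqNgt => /negP/negbNE.
Qed.

Lemma Hk_truncn (R : realType) (X : zmodType) (f : X -> R) (M : R) (x : X) :
  `|f x| <= M -> Hk f (Num.Def.truncn M).+1 x.
Proof. by move=> fxM; rewrite /Hk /= -ltr_norml (le_lt_trans fxM) ?truncnS_gt. Qed.

Section InvariantMetric.
Variables (R : realType) (X : zmodType) (d : X -> X -> R).
Hypothesis dDr : forall x y z, d (x + z) (y + z) = d x y.

Lemma ball_shift_compact (p : X) (r : R) :
  0 < r -> shift_compact d [set x | d x p < r].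
Proof.
move=> r_gt0 u u0; exists p; have [N uN] := u0 r r_gt0.
apply: sub_infinite_set (@infinite_set_ge N) => n /uN /=.
by rewrite addrC -{2}(add0r p) dDr.
Qed.

Lemma cvg_to_subr (u : nat -> X) (l : X) :
  cvg_to d u l -> cvg_to d (fun n => u n - l) 0.
Proof.
move=> ul e e_gt0; have [N uN] := ul e e_gt0; exists N => n /uN.
by rewrite -(dDr _ _ (- l)) subrr.
Qed.

Lemma shift_compact_bounded_WNT (A : set X) (f : X -> R) :
  shift_compact d A -> bounded_on f A -> WNT d f.
Proof.
move=> sA [M fM] u [l ul].
have [x Ax] := sA _ (cvg_to_subr ul).
exists (Num.Def.truncn M).+1, [set n | A (x + (u n - l))], (x - l).
split=> // _ [m Am <-]; apply: Hk_truncn.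
by rewrite addrAC -addrA; exact: fM.
Qed.

End InvariantMetric.

Theorem proposition3p3 (R : realType) (X : zmodType) (d : X -> X -> R)
    (Hd : invariant_metric d) (f : X -> R) :
  ((exists p : X, locally_bounded_at d f p) ->
     exists A : set X, shift_compact d A /\ bounded_on f A) /\
  ((exists A : set X, shift_compact d A /\ bounded_on f A) -> WNT d f).
Proof.
case: Hd => _ _ _ dDr; split.
- move=> [p [r [r_gt0 [M fM]]]]; exists [set x | d x p < r].
  by split; [exact: ball_shift_compact | exists M].
- by move=> [A [sA fA]]; exact: shift_compact_bounded_WNT sA fA.
Qed.
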